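(* Let $\mathscr H$ and $\mathscr F$ be RKHSs on sets $\mathcal X$ and $\mathcal Y$ with feature maps $\phi$ and $\psi$, let $\Phi=[\phi(x_1),\dots,\phi(x_m)]$ and $\Psi=[\psi(y_1),\dots,\psi(y_n)]$ each consist of linearly independent elements, let $B\in\mathbb R^{n\times m}$, and let $S=\Psi B\Phi^\top\colon\mathscr H\to\mathscr F$. Let $G_\Phi=\Phi^\top\Phi$, $G_\Psi=\Psi^\top\Psi$ and $M=B^\top G_\Psi B\in\mathbb R^{m\times m}$. Assume that each singular value of $S$ has multiplicity $1$. Let $\lambda_1,\dots,\lambda_r$ be the nonzero eigenvalues of $MG_\Phi\in\mathbb R^{m\times m}$, counted with multiplicities, with corresponding eigenvectors $\mathbf w_1,\dots,\mathbf w_r\in\mathbb R^m$, and set $$v_i=(\mathbf w_i^\top G_\Phi\mathbf w_i)^{-1/2}\,\Phi\mathbf w_i,\qquad u_i=\lambda_i^{-1/2}Sv_i.$$ Then the singular value decomposition of $S$ is $$S=\sum_{i=1}^r\lambda_i^{1/2}\,(u_i\otimes v_i).$$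
   Context: An RKHS $\mathscr H$ on $\mathcal X$ with kernel $k$ has feature map $\phi(x)=k(x,\cdot)$ (similarly $\mathscr F$ with kernel $l$, feature map $\psi$). Feature matrices are row vectors: $\Phi\mathbf a=\sum_j a_j\phi(x_j)$ for $\mathbf a\in\mathbb R^m$; $\Phi^\top v=(\langle\phi(x_j),v\rangle_{\mathscr H})_j$ for $v\in\mathscr H$; $G_\Phi=(k(x_i,x_j))_{ij}$ and $G_\Psi=(l(y_i,y_j))_{ij}$ are the Gram matrices. Thus $Sv=\sum_i\psi(y_i)\sum_jb_{ij}\langle\phi(x_j),v\rangle$. The tensor product operator is $(y\otimes x)h=\langle x,h\rangle y$; a singular value decomposition $\sum_i\sigma_i(u_i\otimes v_i)$ has orthonormal systems $\{u_i\}\subseteq\mathscr F$, $\{v_i\}\subseteq\mathscr H$ and $\sigma_i>0$. *)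

From HB Require Import structures.
From mathcomp Require Import all_boot all_order all_algebra.
From mathcomp Require Import reals.
Set Implicit Arguments. Unset Strict Implicit. Unset Printing Implicit Defensive.
Import Order.TTheory GRing.Theory Num.Theory.
Local Open Scope ring_scope.

Section RKHSDefs.
Variable R : realType.

Definition inner_product (V : lmodType R) (ip : V -> V -> R) : Prop :=
  [/\ forall u v, ip u v = ip v u,
      forall (a : R) u v w, ip (a *: u + v) w = a * ip u w + ip v w,
      forall u, 0 <= ip u u &
      forall u, ip u u = 0 -> u = 0].

(* completeness w.r.t. the norm ||u|| = sqrt (ip u u) (we compare ||.||^2 with e) *)
Definition ip_complete (V : lmodType R) (ip : V -> V -> R) : Prop :=
  forall u : nat -> V,
    (forall e : R, 0 < e -> exists N, forall n p, (N <= n)%N -> (N <= p)%N ->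
        ip (u n - u p) (u n - u p) < e) ->
    exists l : V, forall e : R, 0 < e -> exists N, forall n, (N <= n)%N ->
        ip (u n - l) (u n - l) < e.

(* V with ip is an RKHS on X with feature map phi (phi x = k(x,.)):
   V is a Hilbert space, and h |-> (x |-> <h, phi x>) identifies V with a
   space of functions on X whose point evaluations are represented by phi. *)
Definition RKHS (X : Type) (V : lmodType R) (ip : V -> V -> R) (phi : X -> V) : Prop :=
  [/\ inner_product ip, ip_complete ip &
      forall h, (forall x, ip h (phi x) = 0) -> h = 0].

Definition gram (X : Type) (V : lmodType R) (ip : V -> V -> R) (phi : X -> V)
  (m : nat) (xs : 'I_m -> X) : 'M[R]_m :=
  \matrix_(i, j) ip (phi (xs i)) (phi (xs j)).

(* Phi a = sum_j a_j phi(x_j) *)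
Definition featmul (X : Type) (V : lmodType R) (phi : X -> V)
  (m : nat) (xs : 'I_m -> X) (a : 'cV[R]_m) : V :=
  \sum_(j < m) a j 0 *: phi (xs j).

(* Phi^T v = (<phi(x_j), v>)_j *)
Definition featT (X : Type) (V : lmodType R) (ip : V -> V -> R) (phi : X -> V)
  (m : nat) (xs : 'I_m -> X) (v : V) : 'cV[R]_m :=
  \col_(j < m) ip (phi (xs j)) v.

Definition lin_indep (X : Type) (V : lmodType R) (phi : X -> V)
  (m : nat) (xs : 'I_m -> X) : Prop :=
  forall a : 'cV[R]_m, featmul phi xs a = 0 -> a = 0.

Definition tensor (V W : lmodType R) (ipV : V -> V -> R) (y : W) (x : V) : V -> W :=
  fun h => ipV x h *: y.

Definition Sop (X Y : Type) (V W : lmodType R) (ipV : V -> V -> R)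
  (phi : X -> V) (psi : Y -> W) (m n : nat) (xs : 'I_m -> X) (ys : 'I_n -> Y)
  (B : 'M[R]_(n, m)) : V -> W :=
  fun v => featmul psi ys (B *m featT ipV phi xs v).

(* v is an eigenvector of S^* S for mu, written through the defining property
   of the adjoint: <S^*S v, h> = <S v, S h> = mu <v, h> for all h. *)
Definition eigen_SstarS (V W : lmodType R) (ipV : V -> V -> R) (ipW : W -> W -> R)
  (S : V -> W) (mu : R) (v : V) : Prop :=
  forall h, ipW (S v) (S h) = mu * ipV v h.

(* every singular value sigma > 0 of S (i.e. sigma^2 eigenvalue of S^*S)
   has multiplicity one: the eigenspace of S^*S for sigma^2 is at most 1-dim. *)
Definition simple_singular_values (V W : lmodType R) (ipV : V -> V -> R)
  (ipW : W -> W -> R) (S : V -> W) : Prop :=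
  forall sigma : R, 0 < sigma -> forall v1 v2,
    eigen_SstarS ipV ipW S (sigma ^+ 2) v1 ->
    eigen_SstarS ipV ipW S (sigma ^+ 2) v2 ->
    v1 != 0 -> exists c : R, v2 = c *: v1.

Definition orthonormal (V : lmodType R) (ip : V -> V -> R) (r : nat) (e : 'I_r -> V) : Prop :=
  forall i j, ip (e i) (e j) = (i == j)%:R.

Definition is_SVD (V W : lmodType R) (ipV : V -> V -> R) (ipW : W -> W -> R)
  (S : V -> W) (r : nat) (sigma : 'I_r -> R) (u : 'I_r -> W) (v : 'I_r -> V) : Prop :=
  [/\ forall i, 0 < sigma i, orthonormal ipW u, orthonormal ipV v &
      forall h, S h = \sum_(i < r) sigma i *: tensor ipV (u i) (v i) h].

End RKHSDefs.

From Pilot Require Import Defs.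
From HB Require Import structures.
From mathcomp Require Import all_boot all_order all_algebra.
From mathcomp Require Import reals.
Import Order.TTheory GRing.Theory Num.Theory.
Local Open Scope ring_scope.
Set Implicit Arguments. Unset Strict Implicit. Unset Printing Implicit Defensive.

(* With t = Phi^T h one has <S h, S h'> = t^T M t', so on the span of Phi the
   operator S^*S acts through A = M G_Phi, which is self-adjoint for the form
   x^T G_Phi y.  Hence (A - mu)^2 x = 0 forces (A - mu) x = 0, the radical of
   the characteristic polynomial annihilates A, and A is diagonalizable.  Each
   w_i spans its eigenspace, because Phi w_i spans an eigenspace of S^*S for the
   simple singular value lambda_i^(1/2); comparing with the diagonal form, the
   lambda_i are distinct, the w_i are G_Phi-orthogonal, and M vanishes on every
   vector orthogonal to all the w_i.  So the v_i are orthonormal, the u_i are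
   orthonormal because <S v_i, S h> = lambda_i <v_i, h>, and S vanishes on the
   orthogonal complement of the v_i, which yields the expansion of S. *)

Definition posdefmx (R : numDomainType) n (G : 'M[R]_n) :=
  forall x : 'cV_n, x != 0 -> 0 < (x^T *m G *m x) 0 0.

Section PosDefMx.
Variables (R : numFieldType) (n : nat) (G : 'M[R]_n).
Hypothesis G_posdef : posdefmx G.

Lemma posdefmx_form_eq0 p (Y : 'M_(n, p)) : Y^T *m G *m Y = 0 -> Y = 0.
Proof.
move=> YGY; apply/matrixP => i j; rewrite mxE.
suff /matrixP/(_ i 0) : col j Y = 0 by rewrite !mxE.
apply/eqP; apply: contraT => /G_posdef.
have -> : (col j Y)^T *m G *m col j Y =
    (delta_mx j 0)^T *m (Y^T *m G *m Y) *m delta_mx j 0.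
  by rewrite colE trmx_mul !mulmxA.
by rewrite YGY mulmx0 mul0mx mxE ltxx.
Qed.

Lemma posdefmx_unit : G \in unitmx.
Proof.
rewrite -unitmx_tr -row_free_unit -kermx_eq0; apply/rowV0P => v /sub_kermxP vGt.
have Gv : G *m v^T = 0 by rewrite -[G]trmxK -trmx_mul vGt trmx0.
apply: trmx_inj; rewrite trmx0; apply: posdefmx_form_eq0.
by rewrite trmxK -mulmxA Gv mulmx0.
Qed.

End PosDefMx.

Section SelfAdjointMx.
Variables (R : numFieldType) (n : nat) (G A : 'M[R]_n).
Hypotheses (G_posdef : posdefmx G) (A_selfadj : G *m A = A^T *m G).

Lemma selfadj_eigen_orth (a b : R) (x y : 'cV_n) :
  A *m x = a *: x -> A *m y = b *: y -> a != b -> (x^T *m G *m y) 0 0 = 0.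
Proof.
move=> Ax Ay neq_ab.
have : x^T *m G *m (A *m y) = (A *m x)^T *m G *m y.
  by rewrite trmx_mul -!mulmxA (mulmxA A^T) -A_selfadj !mulmxA.
rewrite Ax Ay -scalemxAr linearZ /= -!scalemxAl => /matrixP/(_ 0 0)/eqP.
rewrite !mxE -subr_eq0 -mulrBl mulf_eq0 subr_eq0 eq_sym (negbTE neq_ab).
by move/eqP.
Qed.

Lemma selfadj_ker_sqr (mu : R) p (Y : 'M_(n, p)) :
  (A - mu%:M) *m ((A - mu%:M) *m Y) = 0 -> (A - mu%:M) *m Y = 0.
Proof.
move=> AY; apply: (posdefmx_form_eq0 G_posdef).
have NG : (A - mu%:M)^T *m G = G *m (A - mu%:M).
  rewrite linearB /= tr_scalar_mx mulmxBl mulmxBr -A_selfadj.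
  by rewrite mul_scalar_mx mul_mx_scalar.
by rewrite trmx_mul -!mulmxA (mulmxA _ G) NG -!mulmxA AY !mulmx0.
Qed.

End SelfAdjointMx.

Section SelfAdjointPoly.
Variables (R : numFieldType) (n : nat) (G A : 'M[R]_n.+1).
Hypotheses (G_posdef : posdefmx G) (A_selfadj : G *m A = A^T *m G).

Lemma selfadj_horner_undup (s : seq R) (g : {poly R}) :
  horner_mx A (g * \prod_(x <- s) ('X - x%:P)) = 0 ->
  horner_mx A (g * \prod_(x <- undup s) ('X - x%:P)) = 0.
Proof.
have hornerXsubC x : horner_mx A ('X - x%:P) = A - x%:M.
  by rewrite rmorphB /= horner_mx_X horner_mx_C.
elim: s g => [|x s IHs] g //=; rewrite big_cons.
case: ifP => [s_x|_]; last by rewrite mulrA => /IHs; rewrite big_cons mulrA.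
rewrite (perm_big _ (perm_to_rem s_x)) big_cons /= => gx2.
apply: IHs; rewrite (perm_big _ (perm_to_rem s_x)) big_cons /= mulrCA rmorphM /=.
rewrite hornerXsubC -mulmxE; apply: (selfadj_ker_sqr G_posdef A_selfadj).
by move: gx2; rewrite mulrCA [g * _]mulrCA !rmorphM /= hornerXsubC -!mulmxE.
Qed.

End SelfAdjointPoly.

Lemma selfadj_diagonalizable (R : numFieldType) n (G A : 'M[R]_n) (s : seq R) :
  posdefmx G -> G *m A = A^T *m G ->
  char_poly A = \prod_(x <- s) ('X - x%:P) -> diagonalizable A.
Proof.
case: n => [|n] in G A *; first by rewrite [A]flatmx0 => *; exact: diagonalizable0.
move=> G_posdef A_selfadj charA; apply/diagonalizableP.
exists (undup s); first exact: undup_uniq.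
apply: mxminpoly_min; rewrite -[X in horner_mx A X]mul1r.
apply: (selfadj_horner_undup G_posdef A_selfadj).
by rewrite mul1r -charA Cayley_Hamilton.
Qed.

Lemma count_enumT (T : finType) (P : pred T) : count P (enum T) = #|P|.
Proof. by rewrite cardE -size_filter enumT. Qed.

Section Eigenbasis.
Variable F : fieldType.

Lemma char_poly_simmx n (P A B : 'M[F]_n) :
  P \in unitmx -> A ~_P B -> char_poly A = char_poly B.
Proof.
move=> Pu /(simmxP Pu) PA.
have BE : B = P *m A *m invmx P by rewrite PA mulmxK.
pose Pc := map_mx (@polyC F) P; pose Pc' := map_mx (@polyC F) (invmx P).
have PcK : Pc *m Pc' = 1%:M by rewrite -map_mxM mulmxV // map_mx1.
rewrite /char_poly; have -> : char_poly_mx B = Pc *m char_poly_mx A *m Pc'.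
  rewrite /char_poly_mx BE !map_mxM mulmxBr mulmxBl scalar_mxC.
  by rewrite -(mulmxA 'X%:M) PcK mulmx1.
by rewrite !det_mulmx mulrAC -det_mulmx PcK det1 mul1r.
Qed.

Lemma diagonalizable_eigenbasis n (A : 'M[F]_n) (s : seq F) :
  diagonalizable A -> char_poly A = \prod_(x <- s) ('X - x%:P) ->
  exists (C : 'M_n) (d : 'rV_n),
    [/\ C \in unitmx, forall k, A *m col k C = d 0 k *: col k C
      & perm_eq [seq d 0 k | k <- enum 'I_n] s].
Proof.
move=> [P Pu /diagonalizable_forPex [d PA]] charA.
exists (invmx P), d; split; first by rewrite unitmx_inv.
- move=> k; rewrite !colE mulmxA.
  have -> : A *m invmx P = invmx P *m diag_mx d.
    move/(simmxP Pu): PA => PA.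
    by rewrite -(mulKmx Pu (A *m invmx P)) (mulmxA P) PA -mulmxA mulmxV ?mulmx1.
  rewrite -mulmxA scalemxAr; congr (_ *m _).
  apply/matrixP => i j; rewrite mul_diag_mx !mxE.
  by case: eqP => [->|] //= _; rewrite !mulr0.
- apply: prod_XsubC_eq; rewrite -charA (char_poly_simmx Pu PA).
  rewrite char_poly_trig ?diag_mx_is_trig // big_map big_enum /=.
  by apply: eq_bigr => k _; rewrite mxE eqxx mulr1n.
Qed.

Lemma unitmx_col_collinear n (C : 'M[F]_n) (w : 'cV_n) k l (a b : F) :
  C \in unitmx -> col k C = a *: w -> col l C = b *: w -> k = l.
Proof.
move=> Cu Ck Cl; apply/eqP; apply: contraT => neq_kl.
have colC_neq0 j : col j C != 0.
  apply: contraTneq isT => /(congr1 (mulmx (invmx C))).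
  rewrite colE mulKmx // mulmx0 => /matrixP/(_ j 0).
  by rewrite !mxE !eqxx => /eqP; rewrite oner_eq0.
have a_neq0 : a != 0 by apply: contraNneq (colC_neq0 k) => a0; rewrite Ck a0 scale0r.
have : C *m ((delta_mx l 0 : 'cV_n) - (b / a) *: delta_mx k 0) = 0.
  by rewrite mulmxBr -scalemxAr -!colE Ck Cl scalerA divfK // subrr.
move/(congr1 (mulmx (invmx C))); rewrite mulKmx // mulmx0 => /matrixP/(_ l 0).
by rewrite !mxE !eqxx eq_sym (negbTE neq_kl) /= mulr0 subr0 => /eqP; rewrite oner_eq0.
Qed.

Lemma eq_mulmx_cols_unit p n (X Y : 'M[F]_(p, n)) (C : 'M_n) :
  C \in unitmx -> (forall k, X *m col k C = Y *m col k C) -> X = Y.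
Proof.
move=> Cu XYC; apply: (can_inj (mulmxK Cu)); apply/matrixP => i k.
by have /matrixP/(_ i 0) := XYC k; rewrite !colE !mulmxA -!colE !mxE.
Qed.

Lemma eigenline_count_le1 n (A : 'M[F]_n) (s : seq F) (mu : F) (w : 'cV_n) :
  diagonalizable A -> char_poly A = \prod_(x <- s) ('X - x%:P) ->
  (forall x, A *m x = mu *: x -> exists c, x = c *: w) -> (count_mem mu s <= 1)%N.
Proof.
move=> /diagonalizable_eigenbasis/[apply] -[C [d [Cu Cd ds]]] line.
rewrite -(permP ds) count_map count_enumT.
apply/card_le1_eqP => k l; rewrite !inE => /eqP dk /eqP dl.
have [a Ca] := line _ (etrans (Cd k) (congr1 (fun c => c *: _) dk)).
have [b Cb] := line _ (etrans (Cd l) (congr1 (fun c => c *: _) dl)).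
exact: unitmx_col_collinear Cu Cb Ca.
Qed.

End Eigenbasis.

Section SpectralMG.
Variables (R : numFieldType) (m r : nat) (G M : 'M[R]_m).
Variables (lam : 'I_r -> R) (w : 'I_r -> 'cV[R]_m).
Hypotheses (G_sym : G^T = G) (G_posdef : posdefmx G) (M_sym : M^T = M).
Hypotheses (lam_neq0 : forall i, lam i != 0) (w_neq0 : forall i, w i != 0).
Hypothesis MGw : forall i, M *m G *m w i = lam i *: w i.
Hypothesis charMG :
  char_poly (M *m G) = 'X^(m - r) * \prod_(i < r) ('X - (lam i)%:P).
Hypothesis eigenline :
  forall i x, M *m G *m x = lam i *: x -> exists c, x = c *: w i.

Let MG_selfadj : G *m (M *m G) = (M *m G)^T *m G.
Proof. by rewrite trmx_mul G_sym M_sym mulmxA. Qed.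

Let eigs := nseq (m - r) 0 ++ [seq lam i | i <- enum 'I_r].

Let charMG_eigs : char_poly (M *m G) = \prod_(x <- eigs) ('X - x%:P).
Proof.
rewrite charMG big_cat /= big_nseq big_map big_enum /=; congr (_ * _).
by elim: (m - r)%N => [|k IHk]; rewrite ?expr0 // exprS IHk polyC0 subr0.
Qed.

Let MG_diag : diagonalizable (M *m G).
Proof. exact: selfadj_diagonalizable G_posdef MG_selfadj charMG_eigs. Qed.

Lemma eigval_inj : injective lam.
Proof.
move=> i j lam_ij; apply/eqP.
apply: contraLR (eigenline_count_le1 MG_diag charMG_eigs (@eigenline i)) => neq_ij.
rewrite -ltnNge count_cat count_map count_enumT.
apply: leq_trans (leq_addl _ _).
have <- : #|[set i; j]| = 2%N by rewrite cards2 neq_ij.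
apply: subset_leq_card; apply/subsetP => k.
by rewrite !inE => /orP[] /eqP ->; rewrite ?lam_ij.
Qed.

Lemma eigvec_orth i j : i != j -> ((w i)^T *m G *m w j) 0 0 = 0.
Proof.
move=> neq_ij; apply: (selfadj_eigen_orth MG_selfadj (MGw i) (MGw j)).
by apply: contra neq_ij => /eqP /eigval_inj ->.
Qed.

(* When the w_j are G-orthogonal, Q *m G is the G-orthogonal projection onto
   their span. *)
Let Q : 'M[R]_m :=
  \sum_(j < r) (((w j)^T *m G *m w j) 0 0)^-1 *: (w j *m (w j)^T).

Let mulQmx y : Q *m y =
  \sum_(j < r) ((((w j)^T *m G *m w j) 0 0)^-1 * ((w j)^T *m y) 0 0) *: w j.
Proof.
rewrite mulmx_suml; apply: eq_bigr => j _.
rewrite -scalemxAl -(mulmxA (w j)) {1}(mx11_scalar ((w j)^T *m y)).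
by rewrite mul_mx_scalar scalerA.
Qed.

Let QG_eigvec i : Q *m (G *m w i) = w i.
Proof.
rewrite mulQmx (bigD1 i) //= big1 => [|j neq_ji]; last first.
  by rewrite mulmxA (eigvec_orth neq_ji) mulr0 scale0r.
by rewrite addr0 mulmxA mulVf ?scale1r // lt0r_neq0 // G_posdef.
Qed.

Let QG_ker (x : 'cV_m) : M *m G *m x = 0 -> Q *m (G *m x) = 0.
Proof.
move=> MGx; rewrite mulQmx big1 // => j _.
have MGx0 : M *m G *m x = 0 *: x by rewrite MGx scale0r.
by rewrite mulmxA (selfadj_eigen_orth MG_selfadj (MGw j) MGx0) ?mulr0 ?scale0r.
Qed.

Let MGQ : M *m G *m Q = M.
Proof.
have [C [d [Cu Cd ds]]] := diagonalizable_eigenbasis MG_diag charMG_eigs.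
have Gu := posdefmx_unit G_posdef.
apply: (can_inj (mulmxK Gu)); apply: (eq_mulmx_cols_unit Cu) => k.
have : d 0 k \in eigs by rewrite -(perm_mem ds) map_f ?mem_enum.
rewrite mem_cat => /orP[/nseqP[dk0 _] | /mapP[i _ dki]].
  have MGCk : M *m G *m col k C = 0 by rewrite Cd dk0 scale0r.
  by rewrite -!mulmxA (QG_ker MGCk) !mulmx0 mulmxA MGCk.
have [c ->] := eigenline (etrans (Cd k) (congr1 (fun a => a *: _) dki)).
by rewrite -!scalemxAr -!mulmxA QG_eigvec.
Qed.

Lemma orth_eigvecs_ker (t : 'cV_m) :
  (forall j, ((w j)^T *m t) 0 0 = 0) -> M *m t = 0.
Proof.
move=> wt; rewrite -MGQ -mulmxA mulQmx big1 ?mulmx0 // => j _.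
by rewrite wt mulr0 scale0r.
Qed.

End SpectralMG.

Lemma invr_sqrtr_sqr (R : rcfType) (x : R) : 0 <= x ->
  (Num.sqrt x)^-1 * (Num.sqrt x)^-1 = x^-1.
Proof. by move=> x_ge0; rewrite -invfM -expr2 sqr_sqrtr. Qed.

Section InnerProduct.
Variables (R : realType) (V : lmodType R) (ip : V -> V -> R).
Hypothesis ip_inner : inner_product ip.

Lemma ip_sym u v : ip u v = ip v u. Proof. by case: ip_inner. Qed.

Lemma ip_ge0 u : 0 <= ip u u. Proof. by case: ip_inner. Qed.

Lemma ip_eq0 u : ip u u = 0 -> u = 0.
Proof. by case: ip_inner => _ _ _; apply. Qed.

Lemma ip_gt0 u : u != 0 -> 0 < ip u u.
Proof.
by move=> u_neq0; rewrite lt_def ip_ge0 andbT; apply: contraNneq u_neq0 => /ip_eq0 ->.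
Qed.

Lemma ip0l u : ip 0 u = 0.
Proof.
case: ip_inner => _ ipl _ _; have := ipl 1 0 0 u.
rewrite scale1r mul1r addr0 => ip0_twice.
by apply: (addrI (ip 0 u)); rewrite addr0 -ip0_twice.
Qed.

Lemma ipZl a u v : ip (a *: u) v = a * ip u v.
Proof.
by case: ip_inner => _ ipl _ _; rewrite -[a *: u]addr0 ipl ip0l addr0.
Qed.

Lemma ipDl u1 u2 v : ip (u1 + u2) v = ip u1 v + ip u2 v.
Proof.
by case: ip_inner => _ ipl _ _; have := ipl 1 u1 u2 v; rewrite scale1r mul1r.
Qed.

Lemma ipBl u1 u2 v : ip (u1 - u2) v = ip u1 v - ip u2 v.
Proof. by rewrite ipDl -scaleN1r ipZl mulN1r. Qed.

Lemma ipZr a u v : ip u (a *: v) = a * ip u v.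
Proof. by rewrite ip_sym ipZl ip_sym. Qed.

Lemma ipDr u v1 v2 : ip u (v1 + v2) = ip u v1 + ip u v2.
Proof. by rewrite !(ip_sym u) ipDl. Qed.

Lemma ipBr u v1 v2 : ip u (v1 - v2) = ip u v1 - ip u v2.
Proof. by rewrite !(ip_sym u) ipBl. Qed.

Lemma ip_suml k (e : 'I_k -> V) v :
  ip (\sum_(i < k) e i) v = \sum_(i < k) ip (e i) v.
Proof. exact: (big_morph (ip^~ v) (fun u1 u2 => ipDl u1 u2 v) (ip0l v)). Qed.

Lemma ip_sumr k (e : 'I_k -> V) u :
  ip u (\sum_(i < k) e i) = \sum_(i < k) ip u (e i).
Proof. by rewrite ip_sym ip_suml; apply: eq_bigr => i _; rewrite ip_sym. Qed.

Lemma orthonormal_normalize k (e : 'I_k -> V) :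
  (forall i, e i != 0) -> (forall i j, i != j -> ip (e i) (e j) = 0) ->
  Defs.orthonormal ip (fun i => (Num.sqrt (ip (e i) (e i)))^-1 *: e i).
Proof.
move=> e_neq0 e_orth i j; rewrite ipZl ipZr.
have [<-|neq_ij] := eqVneq i j.
  by rewrite mulrA invr_sqrtr_sqr ?ltW ?ip_gt0 // mulVf ?lt0r_neq0 ?ip_gt0.
by rewrite (e_orth _ _ neq_ij) !mulr0; case: eqP neq_ij => // ->; rewrite eqxx.
Qed.

End InnerProduct.

Section SingularValueDecomposition.
Variables (R : realType) (V W : lmodType R) (ipV : V -> V -> R) (ipW : W -> W -> R).
Hypotheses (ipV_inner : inner_product ipV) (ipW_inner : inner_product ipW).
Variable S : V -> W.
Hypothesis S_linear : linear S.

HB.instance Definition _ := GRing.isLinear.Build R V W *:%R S S_linear.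

Lemma eigen_SstarS_ge0 mu v : eigen_SstarS ipV ipW S mu v -> v != 0 -> 0 <= mu.
Proof.
move=> Sv /(ip_gt0 ipV_inner) v_gt0.
by rewrite -(pmulr_lge0 _ v_gt0) -Sv ip_ge0.
Qed.

Lemma eigen_SstarSZ mu c v :
  eigen_SstarS ipV ipW S mu v -> eigen_SstarS ipV ipW S mu (c *: v).
Proof. by move=> Sv h; rewrite linearZ /= !ipZl // Sv mulrCA. Qed.

Lemma is_SVD_eigen_SstarS r (lam : 'I_r -> R) (v : 'I_r -> V) :
  Defs.orthonormal ipV v -> (forall i, 0 < lam i) ->
  (forall i, eigen_SstarS ipV ipW S (lam i) (v i)) ->
  (forall h, (forall i, ipV (v i) h = 0) -> S h = 0) ->
  is_SVD ipV ipW S (fun i => Num.sqrt (lam i))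
    (fun i => (Num.sqrt (lam i))^-1 *: S (v i)) v.
Proof.
move=> v_on lam_gt0 Sv S_ker; split => // [i|i j|h]; first by rewrite sqrtr_gt0.
  rewrite ipZl ?ipZr // Sv v_on mulrA.
  case: eqP => [<-|_]; last by rewrite !mulr0.
  by rewrite mulr1 invr_sqrtr_sqr ?ltW // mulVf ?lt0r_neq0.
pose p := \sum_(i < r) ipV (v i) h *: v i.
have hp_orth i : ipV (v i) (h - p) = 0.
  rewrite ipBr ?ip_sumr // (bigD1 i) //= big1 => [|j neq_ji].
    by rewrite ipZr // v_on eqxx mulr1 addr0 subrr.
  by rewrite ipZr // v_on eq_sym (negbTE neq_ji) mulr0.
have -> : S h = S p by rewrite -[in LHS](subrK p h) linearD /= S_ker // add0r.
rewrite linear_sum; apply: eq_bigr => i _.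
rewrite /tensor linearZ /= !scalerA mulrAC.
by rewrite mulfV ?mul1r // lt0r_neq0 // sqrtr_gt0.
Qed.

End SingularValueDecomposition.

Section FeatureMatrix.
Variables (R : realType) (X : Type) (V : lmodType R) (phi : X -> V).
Variables (m : nat) (xs : 'I_m -> X).

Lemma featmul_is_linear : linear (featmul phi xs).
Proof.
move=> c a b; rewrite /featmul scaler_sumr -big_split.
by apply: eq_bigr => j _; rewrite !mxE scalerDl scalerA.
Qed.

HB.instance Definition _ :=
  GRing.isLinear.Build R 'cV[R]_m V *:%R (featmul phi xs) featmul_is_linear.

Variable ip : V -> V -> R.
Hypothesis ip_inner : inner_product ip.

Lemma featT_is_linear : linear (featT ip phi xs).
Proof. by move=> c u v; apply/matrixP => j k; rewrite !mxE ipDr ?ipZr. Qed.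

Lemma ip_featmul a v : ip (featmul phi xs a) v = (a^T *m featT ip phi xs v) 0 0.
Proof.
by rewrite ip_suml // mxE; apply: eq_bigr => j _; rewrite ipZl // !mxE.
Qed.

Lemma featT_featmul a : featT ip phi xs (featmul phi xs a) = gram ip phi xs *m a.
Proof.
apply/matrixP => j k; rewrite !mxE ip_sumr //; apply: eq_bigr => l _.
by rewrite ipZr // !mxE [k]ord1 mulrC.
Qed.

Lemma ip_featmul2 a b :
  ip (featmul phi xs a) (featmul phi xs b) = (a^T *m gram ip phi xs *m b) 0 0.
Proof. by rewrite ip_featmul featT_featmul mulmxA. Qed.

Lemma gram_sym : (gram ip phi xs)^T = gram ip phi xs.
Proof. by apply/matrixP => i j; rewrite !mxE ip_sym. Qed.

Lemma gram_posdef : lin_indep phi xs -> posdefmx (gram ip phi xs).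
Proof.
move=> phi_indep a a_neq0; rewrite -ip_featmul2 ip_gt0 //.
by apply: contraNneq a_neq0 => /phi_indep ->.
Qed.

End FeatureMatrix.

Section FeatureOperator.
Variables (R : realType) (X Y : Type) (H F : lmodType R).
Variables (ipH : H -> H -> R) (ipF : F -> F -> R) (phi : X -> H) (psi : Y -> F).
Variables (m n : nat) (xs : 'I_m -> X) (ys : 'I_n -> Y) (B : 'M[R]_(n, m)).
Hypotheses (ipH_inner : inner_product ipH) (ipF_inner : inner_product ipF).

Local Notation S := (Sop ipH phi psi xs ys B).
Local Notation M := (B^T *m gram ipF psi ys *m B).

Lemma Sop_linear : linear S.
Proof.
move=> c u v; rewrite /Sop (featT_is_linear phi xs ipH_inner).
by rewrite mulmxDr -scalemxAr linearD linearZ.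
Qed.

Lemma ip_Sop h1 h2 :
  ipF (S h1) (S h2) = ((featT ipH phi xs h1)^T *m M *m featT ipH phi xs h2) 0 0.
Proof. by rewrite ip_featmul2 // trmx_mul !mulmxA. Qed.

Lemma Sop_eq0 h : M *m featT ipH phi xs h = 0 -> S h = 0.
Proof.
by move=> Mt; apply: (ip_eq0 ipF_inner); rewrite ip_Sop -mulmxA Mt mulmx0 mxE.
Qed.

Lemma eigen_SstarS_Sop mu y : M *m gram ipH phi xs *m y = mu *: y ->
  eigen_SstarS ipH ipF S mu (featmul phi xs y).
Proof.
move=> MGy h; rewrite ip_Sop featT_featmul // ip_featmul //.
have -> : (gram ipH phi xs *m y)^T *m M = (M *m gram ipH phi xs *m y)^T.
  by rewrite !trmx_mul trmxK (gram_sym psi ys ipF_inner) !mulmxA.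
by rewrite MGy linearZ /= -scalemxAl mxE.
Qed.

Hypothesis phi_indep : lin_indep phi xs.

Lemma Sop_eigenline mu (w : 'cV_m) :
  simple_singular_values ipH ipF S -> 0 < mu ->
  M *m gram ipH phi xs *m w = mu *: w -> w != 0 ->
  forall x, M *m gram ipH phi xs *m x = mu *: x -> exists c, x = c *: w.
Proof.
move=> simple mu_gt0 MGw w_neq0 x MGx.
have Phiw_neq0 : featmul phi xs w != 0 by apply: contraNneq w_neq0 => /phi_indep ->.
have eigen y : M *m gram ipH phi xs *m y = mu *: y ->
    eigen_SstarS ipH ipF S (Num.sqrt mu ^+ 2) (featmul phi xs y).
  by rewrite sqr_sqrtr ?ltW //; apply: eigen_SstarS_Sop.
have [|c Phix] := simple _ _ _ _ (eigen _ MGw) (eigen _ MGx) Phiw_neq0.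
  by rewrite sqrtr_gt0.
exists c; apply/eqP; rewrite -subr_eq0; apply/eqP/phi_indep.
by rewrite linearB linearZ /= Phix subrr.
Qed.

End FeatureOperator.

Theorem proposition3p13 (R : realType) (X Y : Type) (H F : lmodType R)
  (ipH : H -> H -> R) (ipF : F -> F -> R) (phi : X -> H) (psi : Y -> F)
  (m n : nat) (xs : 'I_m -> X) (ys : 'I_n -> Y) (B : 'M[R]_(n, m)) :
  RKHS ipH phi -> RKHS ipF psi ->
  lin_indep phi xs -> lin_indep psi ys ->
  let S := Sop ipH phi psi xs ys B in
  let GPhi := gram ipH phi xs in
  let GPsi := gram ipF psi ys in
  let M := B^T *m GPsi *m B in
  simple_singular_values ipH ipF S ->
  forall (r : nat) (lam : 'I_r -> R) (w : 'I_r -> 'cV[R]_m),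
    (forall i, lam i != 0) ->
    char_poly (M *m GPhi) = 'X^(m - r) * \prod_(i < r) ('X - (lam i)%:P) ->
    (forall i, w i != 0 /\ (M *m GPhi) *m w i = lam i *: w i) ->
  let v := fun i => (Num.sqrt (((w i)^T *m GPhi *m w i) 0 0))^-1 *: featmul phi xs (w i) in
  let u := fun i => (Num.sqrt (lam i))^-1 *: S (v i) in
  is_SVD ipH ipF S (fun i => Num.sqrt (lam i)) u v.
Proof.
move=> [ipH_inner _ _] [ipF_inner _ _] phi_indep _ S GPhi GPsi M simple r lam w
  lam_neq0 charMG w_eigen v u.
have w_neq0 i := (w_eigen i).1; have MGw i := (w_eigen i).2.
have GPhi_sym : GPhi^T = GPhi := gram_sym phi xs ipH_inner.
have GPhi_posdef : posdefmx GPhi := gram_posdef ipH_inner phi_indep.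
have M_sym : M^T = M by rewrite !trmx_mul trmxK (gram_sym psi ys ipF_inner) mulmxA.
have S_linear : linear S := Sop_linear phi psi xs ys B ipH_inner.
have Sw i := eigen_SstarS_Sop ipH_inner ipF_inner (MGw i).
have Phiw_neq0 i : featmul phi xs (w i) != 0.
  by apply: contraNneq (w_neq0 i) => /phi_indep ->.
have lam_gt0 i : 0 < lam i.
  by rewrite lt_def lam_neq0 (eigen_SstarS_ge0 ipH_inner ipF_inner (Sw i)).
have eigenline i := Sop_eigenline ipH_inner ipF_inner phi_indep simple
  (lam_gt0 i) (MGw i) (w_neq0 i).
have w_orth := eigvec_orth GPhi_sym GPhi_posdef M_sym MGw charMG eigenline.
have M_ker := orth_eigvecs_ker GPhi_sym GPhi_posdef M_sym lam_neq0 w_neq0 MGw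
  charMG eigenline.
apply: (is_SVD_eigen_SstarS ipH_inner ipF_inner S_linear) => //.
- move=> i j; have := orthonormal_normalize ipH_inner Phiw_neq0 _ i j.
  by rewrite /v !ip_featmul2 //; apply=> i' j' /w_orth; rewrite ip_featmul2.
- by move=> i; apply: (eigen_SstarSZ ipH_inner ipF_inner S_linear).
move=> h vh; apply: (Sop_eq0 ipF_inner); apply: M_ker => j.
have /eqP := vh j; rewrite /v ipZl // ip_featmul // mulf_eq0 invr_eq0 sqrtr_eq0.
by rewrite leNgt (GPhi_posdef _ (w_neq0 j)) /= => /eqP.
Qed.
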